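(* Let $X$ be an $n\times p$ real matrix, $Z\in\mathbb{R}^n$ a nonzero vector, and $1\le k\le\min(n,p)$. Let $V_kD_kU_k^T$ be the rank-$k$ truncated singular value decomposition of $X$, so that $\widetilde X_k = V_kD_kU_k^T$ is the best rank-$k$ approximation of $X$ in Frobenius norm, and let $P_Z = Z(Z^TZ)^{-1}Z^T$. Let $\widetilde X_{OG} = (I_n-P_Z)V_kD_kU_k^T$ be the reconstruction produced by the orthogonality-to-group (OG) procedure. Then the reconstruction error of the OG procedure is lower bounded by that of $\widetilde X_k$, and the additional error equals $\|P_ZV_kD_k\|_F^2$: $$\|X-\widetilde X_{OG}\|_F^2 = \|X - V_kD_kU_k^T\|_F^2 + \|P_ZV_kD_k\|_F^2 .$$
   Context: $V_k$ ($n\times k$), $D_k$ ($k\times k$ diagonal), $U_k$ ($p\times k$) contain respectively the first $k$ left singular vectors, the $k$ largest singular values, and the first $k$ right singular vectors of $X$. $\|\cdot\|_F$ is the Frobenius norm. *)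

From HB Require Import structures.
From mathcomp Require Import all_boot all_order all_algebra.
Set Implicit Arguments. Unset Strict Implicit. Unset Printing Implicit Defensive.
Import Order.TTheory GRing.Theory Num.Theory.
Local Open Scope ring_scope.

Definition frob2 (R : realFieldType) (m n : nat) (A : 'M[R]_(m, n)) : R :=
  \sum_(i < m) \sum_(j < n) A i j ^+ 2.

Definition projZ (R : realFieldType) (n : nat) (Z : 'cV[R]_n) : 'M[R]_n :=
  Z *m invmx (Z^T *m Z) *m Z^T.

Definition rdiag (R : realFieldType) (m n : nat) (s : nat -> R) : 'M[R]_(m, n) :=
  \matrix_(i < m, j < n) (if (i : nat) == (j : nat) then s i else 0).

(* Vk (n x k), Dk (k x k, diagonal), Uk (p x k) form a rank-k truncated SVD
   of X: there is a full SVD  X = V D U^T  (V n x n orthogonal, U p x p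
   orthogonal, D n x p rectangular diagonal with nonnegative nonincreasing
   singular values), and Vk, Uk are the first k columns of V, U, and Dk is
   the upper-left k x k block of D (the k largest singular values). *)
Definition trunc_svd (R : realFieldType) (n p k : nat) (X : 'M[R]_(n, p))
    (Vk : 'M[R]_(n, k)) (Dk : 'M[R]_k) (Uk : 'M[R]_(p, k)) : Prop :=
  exists (r q : nat) (V : 'M[R]_(n, k + r)) (U : 'M[R]_(p, k + q)) (s : nat -> R),
    [/\ (k + r)%N = n /\ (k + q)%N = p,
        V^T *m V = 1%:M /\ U^T *m U = 1%:M,
        (forall i, 0 <= s i) /\
        (forall i j, (i <= j)%N -> (j < minn n p)%N -> s j <= s i),
        X = V *m rdiag (k + r) (k + q) s *m U^T
      & [/\ Vk = lsubmx V, Uk = lsubmx U & Dk = ulsubmx (rdiag (k + r) (k + q) s)]].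

From HB Require Import structures.
From mathcomp Require Import all_boot all_order all_algebra.
From mathcomp Require Import ring.
Import Order.TTheory GRing.Theory Num.Theory.
Local Open Scope ring_scope.

(* Since [U_k] has orthonormal columns and [X U_k = V_k D_k], the residual
   [X - V_k D_k U_k^T] is annihilated by [U_k], whereas the extra error
   [P_Z V_k D_k U_k^T] of the OG reconstruction has its rows in the span of the
   columns of [U_k].  The two errors are therefore Frobenius-orthogonal
   (Pythagoras), and right multiplication by [U_k^T] preserves the norm. *)

Section Frobenius.

Variable R : realFieldType.

Lemma frob2_tr (m n : nat) (A : 'M[R]_(m, n)) : frob2 A = \tr (A *m A^T).
Proof.
rewrite /frob2 /mxtrace; apply: eq_bigr => i _; rewrite !mxE.
by apply: eq_bigr => j _; rewrite mxE expr2.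
Qed.

Lemma frob2D (m n : nat) (A B : 'M[R]_(m, n)) :
  frob2 (A + B) = frob2 A + frob2 B + 2 * \tr (A *m B^T).
Proof.
rewrite !frob2_tr linearD /= !mulmxDl !mulmxDr !mxtraceD.
have -> : \tr (B *m A^T) = \tr (A *m B^T) by rewrite -mxtrace_tr trmx_mul trmxK.
by rewrite mulr2n mulrDl mul1r; ring.
Qed.

Lemma frob2D_orth (m n : nat) (A B : 'M[R]_(m, n)) :
  A *m B^T = 0 -> frob2 (A + B) = frob2 A + frob2 B.
Proof. by move=> AB0; rewrite frob2D AB0 linear0 mulr0 addr0. Qed.

Lemma frob2_mul_trmx_orthonormal (m n k : nat) (A : 'M[R]_(m, k))
    (U : 'M[R]_(n, k)) :
  U^T *m U = 1%:M -> frob2 (A *m U^T) = frob2 A.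
Proof.
move=> UU1; rewrite !frob2_tr trmx_mul trmxK !mulmxA -(mulmxA A) UU1.
by rewrite mulmx1.
Qed.

End Frobenius.

Section TruncatedSVD.

Variables (R : realFieldType) (k r q : nat).

Lemma lsubmx_orthonormal (n : nat) (U : 'M[R]_(n, k + q)) :
  U^T *m U = 1%:M -> (lsubmx U)^T *m lsubmx U = 1%:M.
Proof.
move=> UU1; rewrite trmx_lsub mul_usub_mx mulmx_lsub UU1.
by apply/matrixP => i j; rewrite !mxE (inj_eq (@lshift_inj _ _)).
Qed.

Lemma lsubmx_rdiag (s : nat -> R) :
  lsubmx (rdiag (k + r) (k + q) s) = col_mx (ulsubmx (rdiag (k + r) (k + q) s)) 0.
Proof.
apply/matrixP => i j; rewrite !mxE.
case: splitP => i' ->; rewrite !mxE //=.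
by rewrite eqn_leq [(k + _ <= _)%N]leqNgt (leq_trans (ltn_ord j) (leq_addr _ _)).
Qed.

Lemma svd_mul_lsubmx (n p : nat) (X : 'M[R]_(n, p)) (V : 'M[R]_(n, k + r))
    (U : 'M[R]_(p, k + q)) (s : nat -> R) :
  U^T *m U = 1%:M -> X = V *m rdiag (k + r) (k + q) s *m U^T ->
  X *m lsubmx U = lsubmx V *m ulsubmx (rdiag (k + r) (k + q) s).
Proof.
move=> UU1 ->; rewrite -!mulmxA mulmx_lsub UU1 mulmx_lsub mulmx1 lsubmx_rdiag.
by rewrite -[V]hsubmxK mul_row_col mulmx0 addr0 row_mxKl.
Qed.

End TruncatedSVD.

Lemma frob2_deflated_reconstruction (R : realFieldType) (n p k : nat)
    (X : 'M[R]_(n, p)) (P : 'M[R]_n) (Vk : 'M[R]_(n, k)) (Dk : 'M[R]_k)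
    (Uk : 'M[R]_(p, k)) :
  Uk^T *m Uk = 1%:M -> X *m Uk = Vk *m Dk ->
  frob2 (X - (1%:M - P) *m Vk *m Dk *m Uk^T)
  = frob2 (X - Vk *m Dk *m Uk^T) + frob2 (P *m Vk *m Dk).
Proof.
move=> UU1 XU.
have split_error : X - (1%:M - P) *m Vk *m Dk *m Uk^T
    = (X - Vk *m Dk *m Uk^T) + P *m Vk *m Dk *m Uk^T.
  by rewrite !mulmxBl mul1mx opprB addrA addrAC.
have residual_orth : (X - Vk *m Dk *m Uk^T) *m Uk = 0.
  by rewrite mulmxBl XU -(mulmxA (Vk *m Dk)) UU1 mulmx1 subrr.
rewrite split_error frob2D_orth ?frob2_mul_trmx_orthonormal //.
by rewrite trmx_mul trmxK mulmxA residual_orth mul0mx.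
Qed.

Theorem lemma3 (R : realFieldType) (n p k : nat) (X : 'M[R]_(n, p))
    (Z : 'cV[R]_n) (Vk : 'M[R]_(n, k)) (Dk : 'M[R]_k) (Uk : 'M[R]_(p, k)) :
  Z != 0 -> (1 <= k)%N -> (k <= minn n p)%N ->
  trunc_svd X Vk Dk Uk ->
  frob2 (X - (1%:M - projZ Z) *m Vk *m Dk *m Uk^T)
  = frob2 (X - Vk *m Dk *m Uk^T) + frob2 (projZ Z *m Vk *m Dk).
Proof.
move=> _ _ _ [r [q [V [U [s [_ [_ UU1] _ defX [-> -> ->]]]]]]].
apply: frob2_deflated_reconstruction; first exact: lsubmx_orthonormal.
exact: svd_mul_lsubmx.
Qed.
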